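(* Let $\mathcal{G}=(V,\Sigma,R,S_0)$ be a context-free grammar, $\phi$ a specification, $N$ a natural-language description, and $p_\theta(\cdot\mid\cdot,N)$ a path-conditioned production model as described in the context. Let $\textsc{Infeasible}$ be a predicate on partial programs satisfying: (i) (soundness) if $\textsc{Infeasible}(P,\phi)$ holds, then no completion of $P$ satisfies $\phi$; (ii) (exactness on complete programs) for every complete program $P$, $\textsc{Infeasible}(P,\phi)$ holds if and only if $P\not\models\phi$. Suppose the algorithm $\textsc{OpSynth}$ described in the context (with arbitrary leaf-selection rule and arbitrary tie-breaking in the priority queue) terminates and returns a program $P^*\neq\bot$. Then $P^*$ is a complete program with $P^*\models\phi$, and for every complete program $P$ with $P\models\phi$ we have $p_\theta(P\mid N)\le p_\theta(P^*\mid N)$.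
   Context: Grammar and programs: every production has the form $v\to f(s_1,\dots,s_k)$ with $v\in V$ a nonterminal, $f$ a language construct, and $s_i\in V\cup\Sigma$. A partial program is a finite rooted ordered tree whose nodes are labelled by grammar symbols, the root labelled $S_0$; a node labelled by a nonterminal $v$ is either expanded, meaning it is assigned a production $r=v\to f(s_1,\dots,s_k)$ and has exactly $k$ children labelled $s_1,\dots,s_k$ in order, or unexpanded, in which case it is a leaf. Nodes labelled by terminals are leaves. $\mathcal{C}(P)$ denotes the set of expanded (concrete) nodes, $\mathcal{R}(n)$ the production assigned to $n\in\mathcal{C}(P)$, and $\mathcal{I}(P)$ the set of unexpanded nonterminal leaves (inconcrete nodes). $P$ is complete if $\mathcal{I}(P)=\emptyset$. $\textsc{Expand}(P,l,r)$, for $l\in\mathcal{I}(P)$ labelled $v$ and a production $r$ with left-hand side $v$, assigns $r$ to $l$ and attaches the children given by the right-hand side of $r$. A completion of $P$ is any complete program obtained from $P$ by finitely many $\textsc{Expand}$ operations (a complete $P$ is its own unique completion). AST path: for a node $n$ of $P$, $\pi(P,n)=((n_1,i_1),\dots,(n_k,i_k))$ where $n_1$ is the root, $n_{j+1}$ is the $i_j$-th child of $n_j$, and $n$ is the $i_k$-th child of $n_k$, each $n_j$ recorded together with its assigned production (for the root, $\pi$ is empty). Model: for every nonterminal $v$ and every possible AST path $\pi$ ending at a node labelled $v$, $p_\theta(\cdot\mid\pi,N)$ is a probability distribution on the productions with left-hand side $v$. The score of a partial program is $p_\theta(P\mid N)=\prod_{n\in\mathcal{C}(P)}p_\theta(\mathcal{R}(n)\mid\pi(P,n),N)$,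 and its upper bound is $u_\theta(P\mid N)=p_\theta(P\mid N)\prod_{n\in\mathcal{I}(P)}\max_r p_\theta(r\mid\pi(P,n),N)$. Specification: $\phi$ is a set of examples $\mathcal{E}=\mathcal{E}^+\cup\mathcal{E}^-$ of pairs $(x,y)$; a complete program $P$ satisfies $\phi$ ($P\models\phi$) if $P(x)=y$ for all $(x,y)\in\mathcal{E}^+$ and $P(x)\neq y$ for all $(x,y)\in\mathcal{E}^-$. Algorithm $\textsc{OpSynth}(\mathcal{G},\phi,N,p_\theta)$: initialize a max-priority queue $\mathcal{Q}$ containing the single-node partial program $S_0$ with priority $1$. While $\mathcal{Q}\neq\emptyset$: remove an entry $(P,\rho)$ of maximal priority; if $\textsc{Infeasible}(P,\phi)$, continue to the next iteration; if $P$ is complete, return $P$; otherwise choose some leaf $l\in\mathcal{I}(P)$ (by an arbitrary selection rule) and, for each production $r$ with $p_\theta(r\mid\pi(P,l),N)>0$, insert $P'=\textsc{Expand}(P,l,r)$ into $\mathcal{Q}$ with priority $u_\theta(P'\mid N)$. If the queue becomes empty, return $\bot$. *)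

From HB Require Import structures.
From mathcomp Require Import all_boot all_order all_algebra.
From mathcomp Require Import reals.
Set Implicit Arguments. Unset Strict Implicit. Unset Printing Implicit Defensive.
Import Order.TTheory GRing.Theory Num.Theory.
Local Open Scope ring_scope.

(* A leaf carries a grammar
   symbol (inl v : nonterminal, unexpanded; inr a : terminal); an expanded
   node carries its assigned production; its label is the lhs of that
   production. *)
Inductive tree (V Sig Prod : Type) : Type :=
| Leaf of (V + Sig)
| Node of Prod & seq (tree V Sig Prod).
Arguments Leaf {V Sig Prod}.
Arguments Node {V Sig Prod}.

(* AST paths: the sequence of (production of ancestor, child index);
   child indices are 0-based. *)
Definition astpath (Prod : Type) := seq (Prod * nat).

Section Grammar.
Variables (V Sig Prod : finType).
Variable lhs : Prod -> V.
Variable rhs : Prod -> seq (V + Sig).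
Variable S0 : V.

Definition label (t : tree V Sig Prod) : V + Sig :=
  match t with Leaf s => s | Node r _ => inl (lhs r) end.

Fixpoint wf (t : tree V Sig Prod) : bool :=
  match t with
  | Leaf _ => true
  | Node r ts =>
      (map label ts == rhs r) &&
      (fix all_wf (ts : seq (tree V Sig Prod)) : bool :=
         match ts with [::] => true | t :: ts' => wf t && all_wf ts' end) ts
  end.

Definition is_partial (t : tree V Sig Prod) : bool :=
  (label t == inl S0) && wf t.

Fixpoint concrete_aux (pi : astpath Prod) (t : tree V Sig Prod)
  : seq (astpath Prod * Prod) :=
  match t with
  | Leaf _ => [::]
  | Node r ts =>
      (pi, r) ::
      (fix go (i : nat) (ts : seq (tree V Sig Prod)) :=
         match ts with
         | [::] => [::]
         | t :: ts' => concrete_aux (rcons pi (r, i)) t ++ go i.+1 ts'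
         end) 0%N ts
  end.
Definition concrete t := concrete_aux [::] t.

(* inconcrete nodes (unexpanded nonterminal leaves), listed with their
   position (sequence of 0-based child indices from the root), their AST
   path and their label *)
Fixpoint inconcrete_aux (pos : seq nat) (pi : astpath Prod)
  (t : tree V Sig Prod) : seq (seq nat * astpath Prod * V) :=
  match t with
  | Leaf (inl v) => [:: (pos, pi, v)]
  | Leaf (inr _) => [::]
  | Node r ts =>
      (fix go (i : nat) (ts : seq (tree V Sig Prod)) :=
         match ts with
         | [::] => [::]
         | t :: ts' => inconcrete_aux (rcons pos i) (rcons pi (r, i)) t
                       ++ go i.+1 ts'
         end) 0%N ts
  end.
Definition inconcrete t := inconcrete_aux [::] [::] t.

Definition complete (t : tree V Sig Prod) : bool := nilp (inconcrete t).

Fixpoint expand_at (t : tree V Sig Prod) (pos : seq nat) (r : Prod)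
  : tree V Sig Prod :=
  match pos, t with
  | [::], Leaf (inl _) => Node r [seq Leaf s | s <- rhs r]
  | i :: pos', Node r' ts =>
      Node r'
        ((fix go (j : nat) (ts : seq (tree V Sig Prod)) :=
            match ts with
            | [::] => [::]
            | t :: ts' => (if j == i then expand_at t pos' r else t)
                          :: go j.+1 ts'
            end) 0%N ts)
  | _, _ => t
  end.

Inductive expands_to : tree V Sig Prod -> tree V Sig Prod -> Prop :=
| expands_refl P : expands_to P P
| expands_step P pos pi v r Q :
    (pos, pi, v) \in inconcrete P -> lhs r = v ->
    expands_to (expand_at P pos r) Q -> expands_to P Q.

Definition completion (P Q : tree V Sig Prod) : Prop :=
  expands_to P Q /\ complete Q.

Fixpoint path_ok (start : V) (pi : astpath Prod) (v : V) : bool :=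
  match pi with
  | [::] => start == v
  | (r, i) :: pi' =>
      (lhs r == start) &&
      match nth None [seq Some x | x <- rhs r] i with
      | Some (inl w) => path_ok w pi' v
      | _ => false
      end
  end.

Section Model.
Variable R : realType.
Variable NL : Type.
Variable N : NL.
Variable p : astpath Prod -> NL -> Prod -> R.

Definition model_ok : Prop :=
  forall pi v, path_ok S0 pi v ->
    (forall r, lhs r = v -> 0 <= p pi N r) /\
    \sum_(r | lhs r == v) p pi N r = 1.

Definition score (t : tree V Sig Prod) : R :=
  \prod_(x <- concrete t) p x.1 N x.2.

Definition maxprob (pi : astpath Prod) (v : V) : R :=
  \big[Num.max/0]_(r | lhs r == v) p pi N r.

Definition upper (t : tree V Sig Prod) : R :=
  score t * \prod_(x <- inconcrete t) maxprob x.1.2 x.2.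

(* The algorithm OpSynth, as a relation between a priority queue (a multiset
   of (partial program, priority) pairs, represented as a list) and a final
   result (None = bottom).  Any entry of maximal priority may be removed
   (arbitrary tie-breaking) and any inconcrete leaf may be chosen. *)
Variable Infeasible : tree V Sig Prod -> Prop.

Definition children (P : tree V Sig Prod) (pos : seq nat)
  (pi : astpath Prod) (v : V) : seq (tree V Sig Prod * R) :=
  [seq (expand_at P pos r, upper (expand_at P pos r))
  | r <- enum Prod & (lhs r == v) && (0 < p pi N r)].

Inductive opsynth_run :
  seq (tree V Sig Prod * R) -> option (tree V Sig Prod) -> Prop :=
| run_empty : opsynth_run [::] None
| run_infeasible Q1 Q2 P rho res :
    all (fun e => e.2 <= rho) (Q1 ++ Q2) ->
    Infeasible P ->
    opsynth_run (Q1 ++ Q2) res ->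
    opsynth_run (Q1 ++ (P, rho) :: Q2) res
| run_return Q1 Q2 P rho :
    all (fun e => e.2 <= rho) (Q1 ++ Q2) ->
    ~ Infeasible P ->
    complete P ->
    opsynth_run (Q1 ++ (P, rho) :: Q2) (Some P)
| run_expand Q1 Q2 P rho pos pi v res :
    all (fun e => e.2 <= rho) (Q1 ++ Q2) ->
    ~ Infeasible P ->
    ~~ complete P ->
    (pos, pi, v) \in inconcrete P ->
    opsynth_run (Q1 ++ Q2 ++ children P pos pi v) res ->
    opsynth_run (Q1 ++ (P, rho) :: Q2) res.

End Model.

Definition satisfies (X Y : eqType) (eval : tree V Sig Prod -> X -> Y)
  (Epos Eneg : seq (X * Y)) (P : tree V Sig Prod) : Prop :=
  (forall e, e \in Epos -> eval P e.1 = e.2) /\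
  (forall e, e \in Eneg -> eval P e.1 <> e.2).

End Grammar.

From Pilot Require Import Defs.
From HB Require Import structures.
From mathcomp Require Import all_boot all_order all_algebra.
From mathcomp Require Import reals.
From mathcomp Require Import zify.
From Stdlib Require Import Classical.
Import Order.TTheory GRing.Theory Num.Theory.
Set Implicit Arguments. Unset Strict Implicit. Unset Printing Implicit Defensive.

(* The proof is a best-first-search argument.  Call [q] a prefix tree of [t]
   when [t] is obtained from [q] by expanding open leaves.  Three facts about
   trees drive it:
   - a prefix tree of a complete well-formed program [t] can be expanded, one
     leaf at a time, into [t]; so [t] is a completion of each of its prefixes;
   - expanding any open leaf of such a prefix, with the production that [t]
     uses at that position, yields again a prefix of [t];
   - the upper bound u(q) is antitone along prefixes: u(t) <= u(q), because
     every probability lies in [0, 1] and maxprob dominates each choice.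
   The run invariant is then: whenever a complete satisfying program [P] of
   positive score is not yet found, the queue holds a prefix of [P] whose
   priority is at least score(P).  Soundness of Infeasible guarantees such an
   entry is never discarded, expanding it produces a child with the same
   property, and when a complete program is returned with maximal priority
   (which equals its score) that priority dominates score(P).  Positivity of
   score(P) ensures the production leading towards [P] passes the filter
   p > 0 on children; programs of score 0 are dominated trivially. *)

Lemma cat_cancel (A : Type) (s a b : seq A) : s ++ a = s ++ b -> a = b.
Proof. by elim: s => //= x s IH [] /IH. Qed.

Lemma has_extract (A : Type) (a : pred A) s1 s2 x :
  has a (s1 ++ x :: s2) = a x || has a (s1 ++ s2).
Proof. by rewrite !has_cat /= orbCA. Qed.

Lemma all_extract (A : Type) (a : pred A) s1 s2 x :
  all a (s1 ++ x :: s2) = a x && all a (s1 ++ s2).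
Proof. by rewrite !all_cat /= andbCA. Qed.

Section Trees.
Variables (V Sig Prod : finType).
Variable lhs : Prod -> V.
Variable rhs : Prod -> seq (V + Sig).
Variable S0 : V.

Notation T := (tree V Sig Prod).
Notation label := (label lhs).
Notation wf := (wf lhs rhs).

Fixpoint all_prop (P : T -> Prop) (ts : seq T) : Prop :=
  match ts with [::] => True | t :: ts' => P t /\ all_prop P ts' end.

Definition tree_nested_ind (P : T -> Prop) (HL : forall s, P (Leaf s))
  (HN : forall r ts, all_prop P ts -> P (Node r ts)) : forall t, P t :=
  fix F t := match t return P t with
  | Leaf s => HL s
  | Node r ts => HN r ts ((fix G ts := match ts return all_prop P ts with
                     | [::] => I | t :: ts' => conj (F t) (G ts') end) ts)
  end.

(* The tree operations recurse on children through anonymous local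
   fixpoints; we name these sibling recursions and unfold the node cases. *)
Lemma wf_node r ts : wf (Node r ts) = (map label ts == rhs r) && all wf ts.
Proof. rewrite /=; congr (_ && _); by elim: ts => //= t ts ->. Qed.

Fixpoint concrete_siblings (pi : astpath Prod) r i (ts : seq T) :=
  match ts with [::] => [::]
  | t :: ts' => concrete_aux (rcons pi (r, i)) t ++ concrete_siblings pi r i.+1 ts'
  end.

Lemma concrete_node pi r ts :
  concrete_aux pi (Node r ts) = (pi, r) :: concrete_siblings pi r 0 ts.
Proof.
rewrite /=; congr (_ :: _); move: 0%N.
by elim: ts => //= t ts IH i; rewrite IH.
Qed.

Fixpoint inconcrete_siblings (pos : seq nat) (pi : astpath Prod) r i (ts : seq T) :=
  match ts with [::] => [::]
  | t :: ts' => inconcrete_aux (rcons pos i) (rcons pi (r, i)) t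
                ++ inconcrete_siblings pos pi r i.+1 ts'
  end.

Lemma inconcrete_node pos pi r ts :
  inconcrete_aux pos pi (Node r ts) = inconcrete_siblings pos pi r 0 ts.
Proof. rewrite /=; move: 0%N; by elim: ts => //= t ts IH i; rewrite IH. Qed.

Fixpoint expand_siblings k (rel : seq nat) r i (ts : seq T) :=
  match ts with [::] => [::]
  | t :: ts' => (if i == k then expand_at rhs t rel r else t)
                :: expand_siblings k rel r i.+1 ts'
  end.

Lemma expand_node r' ts k rel r :
  expand_at rhs (Node r' ts) (k :: rel) r = Node r' (expand_siblings k rel r 0 ts).
Proof. rewrite /=; congr Node; move: 0%N; by elim: ts => //= t ts IH i; rewrite IH. Qed.

Lemma expand_siblings_past k rel r i (ts : seq T) :
  (k < i)%N -> expand_siblings k rel r i ts = ts.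
Proof.
elim: ts i => //= t ts IH i ki; rewrite IH; last exact: ltn_trans ki _.
by rewrite (gtn_eqF ki).
Qed.

(* Number of expanded nodes: the measure that decreases along a completion. *)
Fixpoint node_count (t : T) : nat :=
  match t with Leaf _ => 0%N
  | Node _ ts => ((fix go ts := match ts with
                   | [::] => 0%N | t :: ts => (node_count t + go ts)%N end) ts).+1
  end.

Fixpoint forest_count (ts : seq T) : nat :=
  match ts with [::] => 0%N | t :: ts => (node_count t + forest_count ts)%N end.

Lemma node_count_node r ts : node_count (Node r ts) = (forest_count ts).+1.
Proof. rewrite /=; congr S; by elim: ts => //= t ts ->. Qed.

Lemma inconcrete_pos (t : T) pos pi x :
  x \in inconcrete_aux pos pi t -> exists rel, x.1.1 = pos ++ rel.
Proof.
elim/tree_nested_ind: t pos pi => [[v|a]|r ts IH] pos pi //=.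
  by rewrite inE => /eqP ->; exists [::]; rewrite cats0.
rewrite -/(inconcrete_aux pos pi (Node r ts)) inconcrete_node; move: 0%N => i.
elim: ts i IH => [|t ts IHl] //= i [IHt IHts].
rewrite mem_cat => /orP[/IHt [rel ->]|/IHl]; last exact.
by exists (i :: rel); rewrite cat_rcons.
Qed.

Lemma inconcrete_siblings_pos (ts : seq T) pos pi r i x :
  x \in inconcrete_siblings pos pi r i ts ->
  exists j rel, (i <= j)%N /\ x.1.1 = pos ++ j :: rel.
Proof.
elim: ts i => [|t ts IHl] //= i.
rewrite mem_cat => /orP[/inconcrete_pos [rel ->]|/IHl [j [rel [hj ->]]]].
  by exists i, rel; rewrite cat_rcons.
by exists j, rel; split => //; apply: ltnW.
Qed.

Lemma own_pos_rel (pos0 rel : seq nat) : pos0 ++ rel = pos0 -> rel = [::].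
Proof. by move=> /(f_equal size); rewrite size_cat -{2}[size pos0]addn0 => /addnI /size0nil. Qed.

Lemma expand_ok (q : T) pos0 pi0 rel pi v r :
  (pos0 ++ rel, pi, v) \in inconcrete_aux pos0 pi0 q -> lhs r = v -> wf q ->
  [/\ wf (expand_at rhs q rel r), label (expand_at rhs q rel r) = label q &
      node_count (expand_at rhs q rel r) = (node_count q).+1].
Proof.
elim/tree_nested_ind: q pos0 pi0 rel => [[w|a]|r' qs IH] pos0 pi0 rel //.
  rewrite /= inE => /eqP [/own_pos_rel -> _ ->] hv _.
  split; [|by rewrite /= hv|by rewrite /=; elim: (rhs r) => //= s l <-].
  rewrite /= -map_comp map_id eqxx /=; by elim: (rhs r).
rewrite inconcrete_node => hin hv; rewrite wf_node => /andP[/eqP hl hw].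
have [j [rel' [_ hrel]]] := inconcrete_siblings_pos hin.
rewrite /= in hrel; have erel := cat_cancel hrel; subst rel.
rewrite expand_node wf_node !node_count_node.
suff: [/\ all wf (expand_siblings j rel' r 0 qs),
          map label (expand_siblings j rel' r 0 qs) = map label qs &
          forest_count (expand_siblings j rel' r 0 qs) = (forest_count qs).+1].
  by case=> -> -> ->; rewrite hl eqxx.
move: 0%N hin hw => i; elim: qs i IH {hl} => [|q qs IHl] //= i [IHq IHqs].
rewrite mem_cat => /orP[hq|hqs] /andP[wq wqs].
- have [rel'' /= hr] := inconcrete_pos hq.
  move: hr; rewrite cat_rcons => /cat_cancel [ej er]; subst j rel''.
  rewrite eqxx expand_siblings_past //.
  have [|-> -> ->] := IHq (rcons pos0 i) (rcons pi0 (r', i)) rel' _ hv wq.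
    by rewrite cat_rcons.
  by rewrite wqs.
- have [j' [rel'' [hj /= /cat_cancel [ej er]]]] := inconcrete_siblings_pos hqs.
  subst j' rel''; rewrite (ltn_eqF hj).
  by case: (IHl _ IHqs hqs wqs) => -> -> ->; rewrite wq addnS.
Qed.

Fixpoint prefix_tree (q t : T) : bool :=
  match q, t with
  | Leaf (inl v), _ => label t == inl v
  | Leaf (inr a), Leaf (inr b) => a == b
  | Node r qs, Node r' ts => (r == r') &&
      (fix go qs ts := match qs, ts with
        | [::], [::] => true
        | q :: qs', t :: ts' => prefix_tree q t && go qs' ts'
        | _, _ => false end) qs ts
  | _, _ => false
  end.

Fixpoint prefix_forest (qs ts : seq T) : bool :=
  match qs, ts with
  | [::], [::] => true
  | q :: qs', t :: ts' => prefix_tree q t && prefix_forest qs' ts'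
  | _, _ => false
  end.

Lemma prefix_tree_node r qs r' ts :
  prefix_tree (Node r qs) (Node r' ts) = (r == r') && prefix_forest qs ts.
Proof. rewrite /=; congr (_ && _); by elim: qs ts => [|q qs IH] [|t ts] //=; rewrite IH. Qed.

Lemma prefix_tree_leaf (t : T) : prefix_tree (Leaf (label t)) t.
Proof. by case: t => [[v|a]|r ts] /=. Qed.

Lemma prefix_forest_leaves (ts : seq T) : prefix_forest [seq Leaf s | s <- map label ts] ts.
Proof. by elim: ts => //= t ts ->; rewrite andbT; apply: prefix_tree_leaf. Qed.

Lemma prefix_tree_wf q t : prefix_tree q t -> wf t -> wf q && (label q == label t).
Proof.
elim/tree_nested_ind: q t => [[v|a] t|r qs IH [s|r' ts]] //.
- by move=> /= /eqP ->.
- by case: t => [[v|b]|] //= /eqP ->.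
rewrite prefix_tree_node wf_node => /andP[/eqP <- hp] /andP[/eqP hl hw].
rewrite wf_node eqxx andbT -hl {hl}.
elim: qs ts IH hp hw => [|q qs IHl] [|t ts] //= [IHq IHqs] /andP[hq hqs] /andP[wt wts].
have /andP[-> /eqP ->] := IHq _ hq wt.
by have /andP[/eqP -> ->] := IHl _ IHqs hqs wts; rewrite eqxx.
Qed.

Lemma prefix_tree_complete q t pos pi :
  inconcrete_aux pos pi q = [::] -> prefix_tree q t -> q = t.
Proof.
elim/tree_nested_ind: q t pos pi => [[v|a] t|r qs IH [s|r' ts]] pos pi //.
- by case: t => [[v|b]|] //= _ /eqP ->.
rewrite inconcrete_node prefix_tree_node => + /andP[/eqP <- hp].
move=> hi; congr Node; move: 0%N hi => i.
elim: qs ts i IH hp => [|q qs IHl] [|t ts] //= i [IHq IHqs] /andP[hq hqs].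
move=> /nilP; rewrite cat_nilp => /andP[/nilP h1 /nilP h2].
by rewrite (IHq _ _ _ h1 hq) (IHl _ _ IHqs hqs h2).
Qed.

Lemma prefix_tree_count (q t : T) : prefix_tree q t -> (node_count q <= node_count t)%N.
Proof.
elim/tree_nested_ind: q t => [s t|r qs IH [s|r' ts]] //.
rewrite prefix_tree_node !node_count_node => /andP[_ hp]; rewrite ltnS.
elim: qs ts IH hp => [|q qs IHl] [|t ts] //= [IHq IHqs] /andP[hq hqs].
by apply: leq_add; [apply: IHq | apply: IHl].
Qed.

Lemma prefix_tree_expand (q t : T) pos0 pi0 rel pi v :
  (pos0 ++ rel, pi, v) \in inconcrete_aux pos0 pi0 q -> prefix_tree q t -> wf t ->
  inconcrete_aux pos0 pi0 t = [::] ->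
  exists r, [/\ lhs r = v, (pi, r) \in concrete_aux pi0 t &
                prefix_tree (expand_at rhs q rel r) t].
Proof.
elim/tree_nested_ind: q t pos0 pi0 rel => [[w|a] t|r' qs IH [s|r'' ts]] pos0 pi0 rel //.
  rewrite /= inE => /eqP [/own_pos_rel -> -> ->].
  case: t => [[w'|b]|r ts] // /eqP [<-] hw _.
  exists r; split => //; first by rewrite concrete_node mem_head.
  by rewrite prefix_tree_node eqxx; move: hw => /andP[/eqP <- _]; apply: prefix_forest_leaves.
rewrite inconcrete_node prefix_tree_node wf_node inconcrete_node.
move=> hin /andP[/eqP <- hp] /andP[_ hw] hi.
have [j [rel' [_ hrel]]] := inconcrete_siblings_pos hin.
rewrite /= in hrel; have erel := cat_cancel hrel; subst rel.
suff [r [hv hr hpr]] : exists r, [/\ lhs r = v, (pi, r) \in concrete_siblings pi0 r' 0 ts &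
                                     prefix_forest (expand_siblings j rel' r 0 qs) ts].
  exists r; split => //; first by rewrite concrete_node inE hr orbT.
  by rewrite expand_node prefix_tree_node eqxx.
move: 0%N hin hi => i.
elim: qs ts i IH hp hw => [|q qs IHl] [|t ts] //= i [IHq IHqs] /andP[hq hqs] /andP[wt wts].
rewrite mem_cat => hin /nilP; rewrite cat_nilp => /andP[/nilP h1 /nilP h2].
case/orP: hin => [hq'|hqs'].
- have [rel'' /= hr] := inconcrete_pos hq'.
  move: hr; rewrite cat_rcons => /cat_cancel [ej er]; subst j rel''.
  have [|r [hv hr hpr]] := IHq t (rcons pos0 i) (rcons pi0 (r', i)) rel' _ hq wt h1.
    by rewrite cat_rcons.
  exists r; split => //; first by rewrite mem_cat hr.
  by rewrite eqxx expand_siblings_past // hpr.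
- have [j' [rel'' [hj /= hr]]] := inconcrete_siblings_pos hqs'.
  move: hr => /cat_cancel [ej er]; subst j' rel''.
  have [r [hv hr hpr]] := IHl _ _ IHqs hqs wts hqs' h2.
  exists r; split => //; first by rewrite mem_cat hr orbT.
  by rewrite (ltn_eqF hj) hq hpr.
Qed.

Lemma prefix_tree_expands (q t : T) : prefix_tree q t -> wf t -> complete t ->
  expands_to lhs rhs q t.
Proof.
move=> + hw /nilP hi.
move: (ltnSn (node_count t - node_count q)); move: {2}(_ - _)%N.+1 => k.
elim: k q => [|k IHk] q // hk hp.
case E: (inconcrete q) => [|[[pos pi] v] xs].
  by rewrite (prefix_tree_complete E hp); constructor.
have hx : ([::] ++ pos, pi, v) \in inconcrete_aux [::] [::] q.
  by rewrite -/(inconcrete q) E mem_head.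
have [r [hv _ hpr]] := prefix_tree_expand hx hp hw hi.
have [_ _ hcount] := expand_ok hx hv (proj1 (andP (prefix_tree_wf hp hw))).
have := prefix_tree_count hpr; rewrite hcount => hlt.
apply: (expands_step hx hv); apply: IHk hpr; rewrite hcount; lia.
Qed.

Lemma path_ok_rcons (pi : astpath Prod) s w r i w' :
  path_ok lhs rhs s pi w -> lhs r = w ->
  nth None [seq Some x | x <- rhs r] i = Some (inl w') ->
  path_ok lhs rhs s (rcons pi (r, i)) w'.
Proof.
elim: pi s => [|[r0 i0] pi IH] s /=; first by move=> /eqP -> <- ->; rewrite /= !eqxx.
case/andP=> h1; case: (nth None _ i0) => [[w0|a]|] // h2 hr hn.
by rewrite h1 /=; apply: IH.
Qed.

(* [valid pi t]: [t] is a well-formed subtree found at the possible AST path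
   [pi]; this is what makes the model's probabilities meaningful inside [t]. *)
Definition valid pi (t : T) :=
  wf t /\ (forall w, label t = inl w -> path_ok lhs rhs S0 pi w).

Fixpoint valid_siblings pi r i (ts : seq T) : Prop :=
  match ts with [::] => True
  | t :: ts' => valid (rcons pi (r, i)) t /\ valid_siblings pi r i.+1 ts' end.

Lemma valid_children pi r ts : valid pi (Node r ts) -> valid_siblings pi r 0 ts.
Proof.
case; rewrite wf_node => /andP[/eqP hl hw] hp.
have hpr : path_ok lhs rhs S0 pi (lhs r) := hp _ erefl.
suff: forall i, (forall k, nth None [seq Some x | x <- rhs r] (i + k) =
   nth None [seq Some (label x) | x <- ts] k) -> valid_siblings pi r i ts.
  by apply => k; rewrite add0n -hl -map_comp.
elim: ts hw {hl hp} => //= t ts IH /andP[wt wts] i hn; split.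
- split => // w hw'; apply: path_ok_rcons hpr erefl _.
  by rewrite -[i]addn0 hn /= hw'.
- by apply: IH => // k; rewrite addSnnS hn.
Qed.

Lemma partial_valid (P : T) : is_partial lhs rhs S0 P -> valid [::] P.
Proof. by case/andP => /eqP hl hw; split => // w; rewrite hl => -[<-] /=. Qed.

Lemma valid_paths (t : T) pi pos : valid pi t ->
  (forall x, x \in concrete_aux pi t -> path_ok lhs rhs S0 x.1 (lhs x.2)) /\
  (forall x, x \in inconcrete_aux pos pi t -> path_ok lhs rhs S0 x.1.2 x.2).
Proof.
elim/tree_nested_ind: t pi pos => [[v|a]|r ts IH] pi pos hv.
- split => x //=; rewrite inE => /eqP -> /=; exact: (proj2 hv) _ erefl.
- by split.
have hc := valid_children hv.
have hpr : path_ok lhs rhs S0 pi (lhs r) := (proj2 hv) _ erefl.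
rewrite concrete_node inconcrete_node.
suff [h1 h2] :
  (forall x, x \in concrete_siblings pi r 0 ts -> path_ok lhs rhs S0 x.1 (lhs x.2)) /\
  (forall x, x \in inconcrete_siblings pos pi r 0 ts -> path_ok lhs rhs S0 x.1.2 x.2).
  by split => // x; rewrite ?inE => // /orP[/eqP -> //|]; apply: h1.
move: 0%N hc => i; elim: ts i IH {hv} => //= t ts IHl i [IHt IHts] [vt vts].
have [c1 i1] := IHt _ (rcons pos i) vt; have [c2 i2] := IHl _ IHts vts.
by split => x; rewrite mem_cat => /orP[]; auto.
Qed.

Section Bounds.
Variables (R : realType) (NL : Type) (N : NL) (p : astpath Prod -> NL -> Prod -> R).
Hypothesis hmodel : model_ok lhs rhs S0 N p.
Local Open Scope ring_scope.
Notation maxprob := (maxprob lhs N p).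

(* Along a possible AST path the model is a probability distribution, so
   each probability, and hence their maximum, lies in [0, 1]. *)
Lemma prob_unit pi v r : path_ok lhs rhs S0 pi v -> lhs r = v -> 0 <= p pi N r <= 1.
Proof.
move=> hpi hr; have [h0 h1] := hmodel hpi.
rewrite h0 //= -h1 (bigD1 r) /=; last by rewrite hr.
by rewrite lerDl; apply: sumr_ge0 => r' /andP[/eqP ? _]; apply: h0.
Qed.

Lemma maxprob_unit pi v : path_ok lhs rhs S0 pi v -> 0 <= maxprob pi v <= 1.
Proof.
move=> hpi; rewrite /Defs.maxprob; apply/andP; split.
- apply: (big_ind (fun x => 0 <= x)) => // [x y hx _|r /eqP hr]; first by rewrite le_max hx.
  exact: (andP (prob_unit hpi hr)).1.
- apply: (big_ind (fun x => x <= 1)) => // [x y hx hy|r /eqP hr]; first by rewrite ge_max hx hy.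
  exact: (andP (prob_unit hpi hr)).2.
Qed.

Lemma le_maxprob pi v r : lhs r = v -> p pi N r <= maxprob pi v.
Proof. by move=> hr; rewrite /Defs.maxprob (bigD1 r) ?hr ?eqxx //= le_max lexx. Qed.

Lemma prod_unit (A : eqType) (s : seq A) (f : A -> R) :
  (forall x, x \in s -> 0 <= f x <= 1) -> 0 <= \prod_(x <- s) f x <= 1.
Proof.
elim: s => [|y s IH] h; first by rewrite big_nil ler01 lexx.
rewrite big_cons; have /andP[a b] := h y (mem_head _ _).
have /andP[c d] := IH (fun x hx => h x (@mem_behead _ (y :: s) x hx)).
by rewrite mulr_ge0 //= mulr_ile1.
Qed.

Lemma prod_pos_factor (A : eqType) (s : seq A) (f : A -> R) x :
  (forall y, y \in s -> 0 <= f y) -> 0 < \prod_(y <- s) f y -> x \in s -> 0 < f x.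
Proof.
move=> h0 hp hx; rewrite lt_def (h0 _ hx) andbT; apply/eqP => e.
by move: hp; rewrite (big_rem x hx) /= e mul0r ltxx.
Qed.

Lemma concrete_prod_unit pi (t : T) : valid pi t ->
  0 <= \prod_(x <- concrete_aux pi t) p x.1 N x.2 <= 1.
Proof.
move=> hv; have [hc _] := valid_paths [::] hv.
by apply: prod_unit => x /hc hx; apply: prob_unit hx erefl.
Qed.

Lemma score_unit (P : T) : is_partial lhs rhs S0 P -> 0 <= score N p P <= 1.
Proof. by move=> /partial_valid; apply: concrete_prod_unit. Qed.

(* The upper bound of a subtree located at position [pos] and AST path [pi];
   [upper] is its instance at the root. *)
Definition bound pos pi (t : T) :=
  (\prod_(x <- concrete_aux pi t) p x.1 N x.2) *
  \prod_(x <- inconcrete_aux pos pi t) maxprob x.1.2 x.2.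

Lemma upper_bound (t : T) : upper lhs N p t = bound [::] [::] t.
Proof. by []. Qed.

Lemma bound_complete (P : T) : complete P -> bound [::] [::] P = score N p P.
Proof. by move=> /nilP hc; rewrite /bound -/(inconcrete P) hc big_nil mulr1. Qed.

Lemma bound_unit pos pi (t : T) : valid pi t -> 0 <= bound pos pi t <= 1.
Proof.
move=> hv; have [_ hi] := valid_paths pos hv.
have /andP[a b] := concrete_prod_unit hv.
have /andP[c d] : 0 <= \prod_(x <- inconcrete_aux pos pi t) maxprob x.1.2 x.2 <= 1.
  by apply: prod_unit => x /hi; apply: maxprob_unit.
by rewrite mulr_ge0 //= mulr_ile1.
Qed.

Fixpoint bound_siblings pos pi r i (ts : seq T) : R :=
  match ts with [::] => 1
  | t :: ts' => bound (rcons pos i) (rcons pi (r, i)) t * bound_siblings pos pi r i.+1 ts'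
  end.

Lemma bound_node pos pi r ts :
  bound pos pi (Node r ts) = p pi N r * bound_siblings pos pi r 0 ts.
Proof.
rewrite /bound concrete_node inconcrete_node big_cons -mulrA; congr (_ * _); move: 0%N.
elim: ts => [|t ts IH] i /=; first by rewrite !big_nil mulr1.
by rewrite !big_cat /= -IH /bound mulrACA.
Qed.

Lemma bound_leaf pos pi v : bound pos pi (Leaf (inl v)) = maxprob pi v.
Proof. by rewrite /bound /= big_nil big_seq1 mul1r. Qed.

Lemma bound_siblings_unit pos pi r i ts :
  valid_siblings pi r i ts -> 0 <= bound_siblings pos pi r i ts <= 1.
Proof.
elim: ts i => [|t ts IH] i /=; first by rewrite ler01 lexx.
case=> vt vts; have /andP[a b] := bound_unit (rcons pos i) vt.
have /andP[c d] := IH _ vts.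
by rewrite mulr_ge0 //= mulr_ile1.
Qed.

(* The upper bound is antitone along prefixes: refining a tree replaces a
   factor maxprob by a product of a chosen probability (at most maxprob) and
   factors that are at most 1. *)
Lemma bound_prefix (q t : T) pos pi : prefix_tree q t -> valid pi t ->
  bound pos pi t <= bound pos pi q.
Proof.
elim/tree_nested_ind: q t pos pi => [[v|a] t|r qs IH [s|r' ts]] pos pi //.
- move=> /= /eqP hl hv; rewrite bound_leaf.
  case: t hl hv => [[w|b]|r ts] //=; first by case=> -> _; rewrite bound_leaf.
  case=> hr hv; rewrite bound_node.
  have /andP[h0 _] := prob_unit ((proj2 hv) _ erefl) erefl.
  have /andP[_ h1] := bound_siblings_unit pos (valid_children hv).
  by apply: le_trans (ler_wpM2l h0 h1) _; rewrite mulr1 le_maxprob.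
- by case: t => [[w|b]|] //= /eqP -> _.
rewrite prefix_tree_node => /andP[/eqP <- hp] hv; rewrite !bound_node.
have /andP[h0 _] := prob_unit ((proj2 hv) _ erefl) erefl.
apply: (ler_wpM2l h0); move: 0%N (valid_children hv) => i.
elim: qs ts i IH hp {hv} => [|q qs IHl] [|t ts] //= i [IHq IHqs] /andP[hq hqs] [vt vts].
have /andP[a _] := bound_unit (rcons pos i) vt; have /andP[c _] := bound_siblings_unit pos vts.
by apply: ler_pM => //; [apply: IHq | apply: IHl].
Qed.

Section Run.
Variables (X Y : eqType) (eval : T -> X -> Y) (Epos Eneg : seq (X * Y))
  (Infeasible : T -> Prop).
Hypothesis hsound : forall P, is_partial lhs rhs S0 P -> Infeasible P ->
  forall Q, completion lhs rhs P Q -> ~ satisfies eval Epos Eneg Q.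
Notation partial := (is_partial lhs rhs S0).
Notation sat := (satisfies eval Epos Eneg).
Notation children := (children lhs rhs N p).

(* Queue invariant: every entry is a partial program, and the priority of a
   complete entry is its score. *)
Definition entry_ok (e : T * R) :=
  partial e.1 && (complete e.1 ==> (e.2 == score N p e.1)).

(* Entry [e] may still lead to the complete program [P]: it is a prefix of
   [P] and its priority is at least score(P). *)
Definition reaches (P : T) (e : T * R) :=
  prefix_tree e.1 P && (score N p P <= e.2).

Lemma reaches_le P s rho :
  has (reaches P) s -> all (fun e => e.2 <= rho) s -> score N p P <= rho.
Proof.
elim: s => //= e s IH /orP[/andP[_ h]|h] /andP[h1 h2]; [exact: le_trans h h1 | exact: IH].
Qed.

Lemma root_reaches P : partial P -> score N p P <= 1 ->
  reaches P (Leaf (inl S0), 1).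
Proof. by case/andP => /eqP hl _ hs; rewrite /reaches /= hl eqxx hs. Qed.

Lemma children_ok P0 pos pi v : partial P0 ->
  (pos, pi, v) \in inconcrete P0 -> all entry_ok (children P0 pos pi v).
Proof.
move=> /andP[/eqP hl hw] hx; rewrite /Defs.children all_map; apply/allP => r.
rewrite mem_filter => /andP[/andP[/eqP hv _] _].
have hx' : ([::] ++ pos, pi, v) \in inconcrete_aux [::] [::] P0 by [].
have [w' l' _] := expand_ok hx' hv hw.
rewrite /entry_ok /is_partial /= w' l' hl eqxx /=; apply/implyP => hc.
by rewrite upper_bound bound_complete.
Qed.

Lemma infeasible_not_prefix P0 P : partial P0 -> Infeasible P0 ->
  partial P -> complete P -> sat P -> ~~ prefix_tree P0 P.
Proof.
move=> h0 hinf /andP[_ wP] cP sP; apply/negP => hpre.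
by apply: (hsound h0 hinf (Q := P)) sP; split => //; apply: prefix_tree_expands.
Qed.

(* Expanding a leaf of an entry that reaches [P] (of positive score) creates
   a child that reaches [P]: the production used by [P] at that leaf has
   positive probability, so the child is generated, and its upper bound is
   at least score(P) by antitonicity. *)
Lemma children_reach P0 P pos pi v :
  partial P -> complete P -> 0 < score N p P -> prefix_tree P0 P ->
  (pos, pi, v) \in inconcrete P0 -> has (reaches P) (children P0 pos pi v).
Proof.
move=> pP cP spos hpre hx0.
have hx : ([::] ++ pos, pi, v) \in inconcrete_aux [::] [::] P0 by [].
have vP := partial_valid pP.
have [r [hv hr hpr]] := prefix_tree_expand hx hpre (proj1 vP) (elimT nilP cP).
have hpos : 0 < p pi N r.
  have [hc _] := valid_paths [::] vP.
  apply: (prod_pos_factor (f := fun x => p x.1 N x.2) _ spos hr).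
  by move=> y /hc hy; exact: (andP (prob_unit hy erefl)).1.
rewrite /Defs.children has_map; apply/hasP; exists r.
  by rewrite mem_filter mem_enum hv eqxx hpos.
by rewrite /reaches /= hpr upper_bound -(bound_complete cP) bound_prefix.
Qed.

Lemma run_optimal q res : opsynth_run lhs rhs N p Infeasible q res ->
  forall Ps, res = Some Ps -> all entry_ok q ->
  [/\ partial Ps, complete Ps, ~ Infeasible Ps &
   forall P, partial P -> complete P -> sat P -> 0 < score N p P ->
     has (reaches P) q -> score N p P <= score N p Ps].
Proof.
elim=> {q res} [|Q1 Q2 P0 rho res hall hinf _ IH|Q1 Q2 P0 rho hall hinf hc|
  Q1 Q2 P0 rho pos pi v res hall hinf _ hx _ IH] Ps //.
- move=> hres; rewrite all_extract => /andP[/andP[h0 _] hok].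
  have [pPs cPs nPs hopt] := IH Ps hres hok.
  split => // P pP cP sP spos; rewrite has_extract => /orP[/andP[hpre _]|]; last exact: hopt.
  by move: (infeasible_not_prefix h0 hinf pP cP sP); rewrite hpre.
- case=> <-; rewrite all_extract => /andP[/andP[h0 hrho] _].
  split => // P pP cP sP spos; rewrite has_extract => /orP[/andP[hpre _]|hrest].
    by rewrite (prefix_tree_complete (pos := [::]) (pi := [::]) (elimT nilP hc) hpre).
  by rewrite -(eqP (implyP hrho hc)); apply: reaches_le hrest hall.
- move=> hres; rewrite all_extract => /andP[/andP[h0 _] hok].
  have [|pPs cPs nPs hopt] := IH Ps hres; first by rewrite catA all_cat hok children_ok.
  split => // P pP cP sP spos; rewrite has_extract => /orP[/andP[hpre _]|hrest];
    apply: hopt => //; rewrite catA has_cat; first by rewrite children_reach ?orbT.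
  by rewrite hrest.
Qed.

End Run.
End Bounds.
End Trees.

Local Open Scope ring_scope.

Theorem mainTheorem1
  (V Sig Prod : finType) (lhs : Prod -> V) (rhs : Prod -> seq (V + Sig))
  (S0 : V)
  (X Y : eqType) (eval : tree V Sig Prod -> X -> Y) (Epos Eneg : seq (X * Y))
  (R : realType) (NL : Type) (N : NL) (p : astpath Prod -> NL -> Prod -> R)
  (Infeasible : tree V Sig Prod -> Prop)
  (Pstar : tree V Sig Prod) :
  model_ok lhs rhs S0 N p ->
  (forall P, is_partial lhs rhs S0 P -> Infeasible P ->
     forall Q, completion lhs rhs P Q -> ~ satisfies eval Epos Eneg Q) ->
  (forall P, is_partial lhs rhs S0 P -> complete P ->
     (Infeasible P <-> ~ satisfies eval Epos Eneg P)) ->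
  opsynth_run lhs rhs N p Infeasible [:: (Leaf (inl S0), 1)] (Some Pstar) ->
  [/\ is_partial lhs rhs S0 Pstar, complete Pstar,
      satisfies eval Epos Eneg Pstar &
      forall P, is_partial lhs rhs S0 P -> complete P ->
        satisfies eval Epos Eneg P -> score N p P <= score N p Pstar].
Proof.
move=> hmodel hsound hexact hrun.
have root_ok : all (entry_ok lhs rhs S0 N p) [:: (Leaf (inl S0), 1)].
  by rewrite /= /entry_ok /is_partial /= eqxx.
have [pPs cPs feasible hopt] := run_optimal hmodel hsound hrun erefl root_ok.
split => //; first by apply: NNPP => nsat; apply/feasible/(hexact _ pPs cPs).
move=> P pP cP sP; have /andP[_ score_le1] := score_unit hmodel pP.
have [spos|snonpos] := ltrP 0 (score N p P).
  by apply: hopt => //=; rewrite (root_reaches pP).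
exact: le_trans snonpos (andP (score_unit hmodel pPs)).1.
Qed.
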